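(* Under the coupled PIMH scheme described in the context, for any $n\ge1$ and $s\ge0$, $p_N^{(n)}\ge\tilde p_N^{(n-1)}\implies p_N^{(n+s)}\ge\tilde p_N^{(n+s-1)}$ almost surely. (That is, the sequence $(p_N^{(n+1)})_{n\ge0}$ stochastically dominates $(\tilde p_N^{(n)})_{n\ge0}$ in this sense.)
   Context: A particle filter (PF) call $(X_{1:T},p_N)\sim\mathrm{PF}$ returns a random path $X_{1:T}$ and a strictly positive random likelihood estimate $p_N$. Coupled PIMH: sample $(X^{(0)},p_N^{(0)})\sim\mathrm{PF}$. At iteration $n\ge1$ draw a fresh independent $(X^*,p_N^* )\sim\mathrm{PF}$ and a single $\mathfrak u\sim\mathcal U[0,1]$ shared by both chains. First chain: if $\mathfrak u\le 1\wedge p_N^*/p_N^{(n-1)}$ set $(X^{(n)},p_N^{(n)})=(X^*,p_N^* )$, else $(X^{(n)},p_N^{(n)})=(X^{(n-1)},p_N^{(n-1)})$. Second chain: at $n=1$ set $(\tilde X^{(0)},\tilde p_N^{(0)})=(X^*,p_N^* )$; for $n\ge2$, if $\mathfrak u\le 1\wedge p_N^*/\tilde p_N^{(n-2)}$ set $(\tilde X^{(n-1)},\tilde p_N^{(n-1)})=(X^*,p_N^* )$, else $(\tilde X^{(n-1)},\tilde p_N^{(n-1)})=(\tilde X^{(n-2)},\tilde p_N^{(n-2)})$. *)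

(* The coupled PIMH scheme as a deterministic function of the
   sampled randomness: PF outputs (xs n, ps n) and shared uniforms us n. *)
From mathcomp Require Import all_boot all_order all_algebra.
Set Implicit Arguments. Unset Strict Implicit. Unset Printing Implicit Defensive.
Import Order.TTheory GRing.Theory Num.Theory.
Local Open Scope ring_scope.

Section CoupledPIMH.
Variables (R : realFieldType) (X : Type).
(* xs 0, ps 0 : the initial PF draw (X^(0), p_N^(0));
   xs n, ps n (n >= 1) : the fresh PF draw (X^*, p_N^* ) at iteration n;
   us n (n >= 1) : the uniform shared by both chains at iteration n. *)
Variables (xs : nat -> X) (ps : nat -> R) (us : nat -> R).

Fixpoint pimh1 (n : nat) : X * R :=
  match n with
  | 0 => (xs 0, ps 0)
  | m.+1 => let prev := pimh1 m in
            if us m.+1 <= Num.min 1 (ps m.+1 / prev.2)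
            then (xs m.+1, ps m.+1) else prev
  end.

(* Second chain: pimh2 k = (tilde X^(k), tilde p_N^(k)), updated at iteration
   n = k+1 (k >= 1) with the same proposal and uniform as the first chain. *)
Fixpoint pimh2 (k : nat) : X * R :=
  match k with
  | 0 => (xs 1, ps 1)
  | m.+1 => let prev := pimh2 m in
            if us m.+2 <= Num.min 1 (ps m.+2 / prev.2)
            then (xs m.+2, ps m.+2) else prev
  end.
End CoupledPIMH.

(* Both chains use the same proposal and uniform, and the Metropolis-Hastings
   update of the likelihood estimate, a |-> (p if u <= min(1, p/a) else a), is
   nondecreasing in the current value a: a proposal accepted from a is also
   accepted from any smaller b, and a proposal rejected from a is below a.
   Since the second chain is the first one delayed by one proposal, the
   ordering of the two likelihood estimates is preserved at every iteration. *)
From mathcomp Require Import all_boot all_order all_algebra.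
Set Implicit Arguments. Unset Strict Implicit. Unset Printing Implicit Defensive.
Import Order.TTheory GRing.Theory Num.Theory.
Local Open Scope ring_scope.

Section MHStep.
Variable R : realFieldType.

Definition mh_step (u p a : R) : R :=
  if u <= Num.min 1 (p / a) then p else a.

Lemma mh_step_gt0 (u p a : R) : 0 < p -> 0 < a -> 0 < mh_step u p a.
Proof. by rewrite /mh_step; case: ifP. Qed.

Lemma mh_accept_le (u p a b : R) : 0 <= p -> 0 < b -> b <= a ->
  u <= Num.min 1 (p / a) -> u <= Num.min 1 (p / b).
Proof.
move=> p_ge0 b_gt0 le_ba; rewrite !le_min => /andP[-> /le_trans]; apply.
have a_gt0 : 0 < a := lt_le_trans b_gt0 le_ba.
by rewrite ler_wpM2l // lef_pV2 ?posrE.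
Qed.

Lemma mh_reject_le (u p a : R) : 0 < a -> u <= 1 ->
  ~~ (u <= Num.min 1 (p / a)) -> p <= a.
Proof.
move=> a_gt0 u_le1; rewrite le_min u_le1 -ltNge => /lt_le_trans/(_ u_le1).
by rewrite ltr_pdivrMr // mul1r => /ltW.
Qed.

Lemma mh_step_homo (u p : R) : 0 <= p -> u <= 1 ->
  {in Num.pos &, {homo mh_step u p : b a / b <= a}}.
Proof.
move=> p_ge0 u_le1 b a; rewrite !posrE => b_gt0 a_gt0 le_ba; rewrite /mh_step.
case: ifP => acc_b; case: ifPn => acc_a //.
- exact: mh_reject_le acc_a.
- by rewrite (mh_accept_le p_ge0 b_gt0 le_ba acc_a) in acc_b.
Qed.

End MHStep.

Section CoupledChains.
Variables (R : realFieldType) (X : Type).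
Variables (xs : nat -> X) (ps us : nat -> R).
Hypothesis ps_gt0 : forall n, 0 < ps n.
Hypothesis us_le1 : forall n, us n <= 1.

Lemma pimh1S_lik m :
  (pimh1 xs ps us m.+1).2 = mh_step (us m.+1) (ps m.+1) (pimh1 xs ps us m).2.
Proof. by rewrite /= /mh_step; case: ifP. Qed.

Lemma pimh2S_lik m :
  (pimh2 xs ps us m.+1).2 = mh_step (us m.+2) (ps m.+2) (pimh2 xs ps us m).2.
Proof. by rewrite /= /mh_step; case: ifP. Qed.

Lemma pimh1_lik_gt0 m : 0 < (pimh1 xs ps us m).2.
Proof. by elim: m => [|m IHm]; [exact: ps_gt0 | rewrite pimh1S_lik mh_step_gt0]. Qed.

Lemma pimh2_lik_gt0 m : 0 < (pimh2 xs ps us m).2.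
Proof. by elim: m => [|m IHm]; [exact: ps_gt0 | rewrite pimh2S_lik mh_step_gt0]. Qed.

Lemma pimh_lik_le_step k :
  (pimh2 xs ps us k).2 <= (pimh1 xs ps us k.+1).2 ->
  (pimh2 xs ps us k.+1).2 <= (pimh1 xs ps us k.+2).2.
Proof.
move=> le_lik; rewrite pimh1S_lik pimh2S_lik.
apply: (mh_step_homo (ltW (ps_gt0 _)) (us_le1 _)) le_lik.
  by rewrite posrE pimh2_lik_gt0.
by rewrite posrE pimh1_lik_gt0.
Qed.

End CoupledChains.

Theorem proposition5 (R : realFieldType) (X : Type)
    (xs : nat -> X) (ps : nat -> R) (us : nat -> R)
    (hps : forall n, 0 < ps n)
    (hus : forall n, 0 <= us n <= 1)
    (n s : nat) (hn : (1 <= n)%N) :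
  (pimh2 xs ps us n.-1).2 <= (pimh1 xs ps us n).2 ->
  (pimh2 xs ps us (n + s).-1).2 <= (pimh1 xs ps us (n + s)%N).2.
Proof.
have us_le1 m : us m <= 1 by case/andP: (hus m).
case: n hn => // k _ /= le_k.
elim: s => [|s IHs]; first by rewrite addn0.
by rewrite addnS; exact: pimh_lik_le_step hps us_le1 _ IHs.
Qed.
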